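(* Let $p$ be a prime and $k,\ell$ integers with $k>0$, $\ell\ge0$; put $q=p^k$ and $Q=p^{\ell}$. For any $c\in\mathbb{F}_q^*$, let \[ f_6(X)=X^{3q}-3X^{2q+1}+3X^{q+2}-X^3+cX^{q^2Q}+cX^{qQ}+cX^{Q}. \] Then $f_6(X)$ permutes $\mathbb{F}_{q^3}$ if and only if $q\equiv 2\pmod 3$.
   Context: A polynomial permutes $\mathbb{F}_{q^3}$ if the induced map $\mathbb{F}_{q^3}\to\mathbb{F}_{q^3}$ is a bijection. *)

From HB Require Import structures.
From mathcomp Require Import all_boot all_order all_algebra all_field.
Set Implicit Arguments. Unset Strict Implicit. Unset Printing Implicit Defensive.
Import GRing.Theory.
Local Open Scope ring_scope.

Definition permutes_field (F : finFieldType) (P : {poly F}) : Prop :=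
  bijective (fun x : F => P.[x]).

Definition f6 (F : finFieldType) (q Q : nat) (c : F) : {poly F} :=
  'X^(3 * q) - 3%:R *: 'X^(2 * q + 1) + 3%:R *: 'X^(q + 2) - 'X^3
  + c *: 'X^(q ^ 2 * Q) + c *: 'X^(q * Q) + c *: 'X^Q.

(* Let sigma x = x ^+ q be the Frobenius of F = GF(q^3) over GF(q) and
   Tr x = x + sigma x + sigma^2 x, so that f6(x) = (sigma x - x)^3 + c Tr(x)^Q.
   If 3 | q then f6(1) = f6(0).  If q = 1 mod 3, GF(q) contains a primitive
   cube root of unity w, and f6(w z) = f6(z) for every z of trace 0.
   If q = 2 mod 3, cubing is injective on F.  An element a of trace 0 satisfies
   a^3 = N(a) - e2(a) a with N(a), e2(a) fixed by sigma; hence if a, b have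
   trace 0 and a^3 - b^3 is fixed, then e2(a) a - e2(b) b is fixed and of
   trace 0, so it vanishes, which forces b = l a with l fixed and l^3 = 1.
   Now f6(x1) = f6(x2) gives sigma x1 - x1 = sigma x2 - x2, then
   Tr x1 = Tr x2, and x1 - x2 is fixed with trace 3 (x1 - x2) = 0. *)

From HB Require Import structures.
From mathcomp Require Import all_boot all_order all_algebra all_field.
From mathcomp Require Import fingroup pgroup.
From mathcomp Require Import ring zify.
Set Implicit Arguments.
Unset Strict Implicit.
Unset Printing Implicit Defensive.

Import GRing.Theory.
Local Open Scope ring_scope.

Section FrobeniusPower.
Variables (R : comNzSemiRingType) (n : nat) (pchar_n : [pchar R].-nat n).

Definition frobenius_pow of [pchar R].-nat n := fun x : R => x ^+ n.

Fact frobenius_pow_is_nmod_morphism : nmod_morphism (frobenius_pow pchar_n).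
Proof.
split=> [|x y]; rewrite /frobenius_pow ?exprDn_pchar // expr0n.
by case/andP: pchar_n => /lt0n_neq0/negPf->.
Qed.

Fact frobenius_pow_is_monoid_morphism : monoid_morphism (frobenius_pow pchar_n).
Proof. by split=> [|x y]; rewrite /frobenius_pow ?expr1n ?exprMn. Qed.

HB.instance Definition _ := GRing.isNmodMorphism.Build R R
  (frobenius_pow pchar_n) frobenius_pow_is_nmod_morphism.
HB.instance Definition _ := GRing.isMonoidMorphism.Build R R
  (frobenius_pow pchar_n) frobenius_pow_is_monoid_morphism.

End FrobeniusPower.

Lemma pchar_natX (R : nzSemiRingType) p k :
  p \in [pchar R] -> [pchar R].-nat (p ^ k)%N.
Proof.
move=> pcharRp; rewrite (eq_pnat _ (pcharf_eq pcharRp)) pnatX.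
by rewrite pnat_id ?(pcharf_prime pcharRp).
Qed.

Section CyclicTrace.
Variables (F : fieldType) (sigma : {rmorphism F -> F}).
Hypothesis sigma3 : forall x, sigma (sigma (sigma x)) = x.

Definition trace3 x := x + sigma x + sigma (sigma x).
Definition sym2_3 x :=
  x * sigma x + sigma x * sigma (sigma x) + sigma (sigma x) * x.
Definition norm3 x := x * sigma x * sigma (sigma x).

Lemma sigma_trace3 x : sigma (trace3 x) = trace3 x.
Proof. by rewrite /trace3 !rmorphD sigma3 addrC addrA. Qed.

Lemma sigma_sym2_3 x : sigma (sym2_3 x) = sym2_3 x.
Proof. rewrite /sym2_3 !rmorphD !rmorphM sigma3; ring. Qed.

Lemma sigma_norm3 x : sigma (norm3 x) = norm3 x.
Proof. rewrite /norm3 !rmorphM sigma3; ring. Qed.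

Lemma trace3B x y : trace3 (x - y) = trace3 x - trace3 y.
Proof. rewrite /trace3 !rmorphB; ring. Qed.

Lemma trace3_fixedM a x : sigma a = a -> trace3 (a * x) = a * trace3 x.
Proof. move=> sa; rewrite /trace3 !rmorphM !sa; ring. Qed.

Lemma sym2_3_fixedM a x : sigma a = a -> sym2_3 (a * x) = a ^+ 2 * sym2_3 x.
Proof. move=> sa; rewrite /sym2_3 !rmorphM !sa; ring. Qed.

Lemma trace3_sub_sigma x : trace3 (sigma x - x) = 0.
Proof. rewrite /trace3 !rmorphB sigma3; ring. Qed.

Lemma trace3_fixed x : sigma x = x -> trace3 x = 3%:R * x.
Proof. move=> sx; rewrite /trace3 !sx; ring. Qed.

(* x is a root of X^3 - trace3 x X^2 + sym2_3 x X - norm3 x. *)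
Lemma cube_trace3_eq0 x : trace3 x = 0 -> x ^+ 3 = norm3 x - sym2_3 x * x.
Proof.
move=> /eqP; rewrite /trace3 addrC addr_eq0 => /eqP s2x.
rewrite /norm3 /sym2_3 s2x; ring.
Qed.

Definition cubic_trace_map (c : F) (tau : F -> F) x :=
  (sigma x - x) ^+ 3 + c * tau (trace3 x).

Lemma cubic_trace_map_char3_not_inj c tau :
  3%:R = 0 :> F -> ~ injective (cubic_trace_map c tau).
Proof.
move=> three0 /(_ 1 0) f_inj; apply: (negP (oner_neq0 F)); apply/eqP/f_inj.
have trace3_fixed0 x : sigma x = x -> trace3 x = 0.
  by move=> /trace3_fixed->; rewrite three0 mul0r.
by rewrite /cubic_trace_map !trace3_fixed0 ?rmorph0 ?rmorph1 // !subrr.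
Qed.

Lemma cubic_trace_map_unity_root_not_inj c tau w z :
  w ^+ 3 = 1 -> w != 1 -> sigma w = w -> trace3 z = 0 -> z != 0 ->
  ~ injective (cubic_trace_map c tau).
Proof.
move=> w3 w_neq1 sw tz z_neq0 /(_ (w * z) z) f_inj; apply: (negP w_neq1).
have f_wz : cubic_trace_map c tau (w * z) = cubic_trace_map c tau z.
  rewrite /cubic_trace_map trace3_fixedM // tz mulr0 rmorphM sw -mulrBr.
  by rewrite exprMn w3 mul1r.
by apply/eqP/(mulIf z_neq0); rewrite mul1r f_inj.
Qed.

Section CharNot3.
Hypothesis three_neq0 : 3%:R != 0 :> F.

Lemma fixed_trace3_eq0 x : sigma x = x -> trace3 x = 0 -> x = 0.
Proof.
by move=> /trace3_fixed-> /eqP; rewrite mulf_eq0 (negPf three_neq0) => /eqP.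
Qed.

Section CubeInjective.
Hypothesis cube_inj : injective (fun x : F => x ^+ 3).

Lemma trace3_eq0_sym2_3M_eq0 x : trace3 x = 0 -> sym2_3 x * x = 0 -> x = 0.
Proof.
move=> tx /eqP; rewrite mulf_eq0 => /predU1P[sx|/eqP//].
apply: fixed_trace3_eq0 => //; apply: cube_inj => /=.
by rewrite -rmorphXn cube_trace3_eq0 // sx mul0r subr0 sigma_norm3.
Qed.

Lemma trace3_eq0_cube_inj a b : trace3 a = 0 -> trace3 b = 0 ->
  sigma (a ^+ 3 - b ^+ 3) = a ^+ 3 - b ^+ 3 -> a = b.
Proof.
move=> ta tb fixed_ab.
have eq_ab : sym2_3 a * a = sym2_3 b * b.
  apply/eqP; rewrite -subr_eq0; apply/eqP/fixed_trace3_eq0.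
    have -> : sym2_3 a * a - sym2_3 b * b =
              norm3 a - norm3 b - (a ^+ 3 - b ^+ 3).
      by rewrite !cube_trace3_eq0 //; ring.
    by rewrite rmorphB fixed_ab rmorphB !sigma_norm3.
  by rewrite trace3B !trace3_fixedM ?sigma_sym2_3 // ta tb !mulr0 subrr.
have [a0|a_neq0] := eqVneq a 0.
  by rewrite a0; apply/esym/trace3_eq0_sym2_3M_eq0; rewrite // -eq_ab a0 mulr0.
have sa_neq0 : sym2_3 a * a != 0.
  by apply: contra_neq a_neq0; exact: trace3_eq0_sym2_3M_eq0.
have sb_neq0 : sym2_3 b != 0.
  by apply: contra_neq sa_neq0; rewrite eq_ab => ->; rewrite mul0r.
pose l := sym2_3 a / sym2_3 b.
have sl : sigma l = l by rewrite fmorph_div !sigma_sym2_3.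
have b_eq : b = l * a by rewrite /l mulrAC eq_ab mulrAC divff // mul1r.
have l3 : l ^+ 3 = 1 ^+ 3.
  apply: (mulIf sa_neq0).
  by rewrite expr1n mul1r {2}eq_ab b_eq sym2_3_fixedM //; ring.
by rewrite b_eq (cube_inj l3) mul1r.
Qed.

Lemma cubic_trace_map_inj c (tau : {rmorphism F -> F}) :
  c != 0 -> sigma c = c -> (forall x, sigma (tau x) = tau (sigma x)) ->
  injective (cubic_trace_map c tau).
Proof.
move=> c_neq0 sc sigma_tau x1 x2 f_eq.
have eq_sub : sigma x1 - x1 = sigma x2 - x2.
  apply: trace3_eq0_cube_inj; rewrite ?trace3_sub_sigma //.
  have -> : (sigma x1 - x1) ^+ 3 - (sigma x2 - x2) ^+ 3 =
            c * (tau (trace3 x2) - tau (trace3 x1)).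
    by move: f_eq; rewrite /cubic_trace_map => /(canRL (addrK _))->; ring.
  by rewrite rmorphM sc rmorphB !sigma_tau !sigma_trace3.
have eq_trace3 : trace3 x1 = trace3 x2.
  move: f_eq; rewrite /cubic_trace_map eq_sub.
  by move=> /addrI/(mulfI c_neq0)/fmorph_inj.
apply/eqP; rewrite -subr_eq0; apply/eqP/fixed_trace3_eq0.
  by rewrite rmorphB (canRL (subrK _) eq_sub); ring.
by rewrite trace3B eq_trace3 subrr.
Qed.

End CubeInjective.
End CharNot3.
End CyclicTrace.

Lemma permutes_field_inj (F : finFieldType) (P : {poly F}) (f : F -> F) :
  horner P =1 f -> permutes_field P <-> injective f.
Proof.
move=> Pf; split=> [/bij_inj P_inj | f_inj]; first exact: eq_inj P_inj Pf.
by apply: injF_bij; apply: eq_inj f_inj (fsym Pf).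
Qed.

Lemma expr3_inj_card_mod3 (F : finFieldType) :
  (#|F| %% 3 = 2)%N -> injective (fun x : F => x ^+ 3).
Proof.
move=> cardF3; pose e := (2 * (#|F| %/ 3)).+1.
suff cube_invK (x : F) : (x ^+ 3) ^+ e = x.
  by move=> x y /(congr1 (fun z => z ^+ e)); rewrite !cube_invK.
rewrite -exprM; have [->|x_neq0] := eqVneq x 0; first by rewrite expr0n.
apply: (mulIf x_neq0); rewrite -exprSr.
have -> : (3 * e).+1 = (#|F| * 2)%N.
  by have := divn_eq #|F| 3; rewrite cardF3 /e; lia.
by rewrite exprM expf_card.
Qed.

Lemma exists_expr_neq (F : finFieldType) n :
  (1 < n < #|F|)%N -> exists x : F, x ^+ n != x.
Proof.
case/andP=> n_gt1 n_lt_card; apply/existsP; apply: contraLR n_lt_card.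
rewrite negb_exists => /forallP /= all_fixed; rewrite -leqNgt.
have size_XnX : size ('X^n - 'X : {poly F}) = n.+1.
  by rewrite size_polyDl ?size_polyXn // size_polyN size_polyX ltnS.
rewrite -ltnS -size_XnX cardE max_poly_roots ?enum_uniq //.
  by rewrite -size_poly_eq0 size_XnX.
by apply/allP=> x _; rewrite /root !hornerE subr_eq0; exact/negPn/all_fixed.
Qed.

Lemma exists_cube_unity_root (F : finFieldType) :
  (3 %| #|F|.-1)%N -> exists2 w : F, w ^+ 3 = 1 & w != 1.
Proof.
rewrite -card_finField_unit => /(Cauchy (isT : prime 3))[u _ u_order].
exists (val u); first by rewrite -FinRing.val_unitX -u_order expg_order.
apply/eqP=> u1; have u_eq1 : u = 1%g by apply: val_inj; rewrite u1.
by move: u_order; rewrite u_eq1 order1.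
Qed.

Lemma horner_f6 (F : finFieldType) q Q (pchar_q : [pchar F].-nat q)
    (pchar_Q : [pchar F].-nat Q) (c : F) :
  horner (f6 q Q c) =1
  cubic_trace_map (frobenius_pow pchar_q) c (frobenius_pow pchar_Q).
Proof.
move=> x; rewrite /f6 /cubic_trace_map /trace3 !rmorphD /= /frobenius_pow.
rewrite !hornerE -mulnn (mulnC 3) (mulnC 2) !exprD !exprM; ring.
Qed.

Section CubicExtension.
Variables (F : finFieldType) (p k : nat).
Hypotheses (pchar_p : p \in [pchar F]) (k_gt0 : (0 < k)%N).
Hypothesis cardF : #|F| = ((p ^ k) ^ 3)%N.

Local Notation q := (p ^ k)%N.
Local Notation sigma := (frobenius_pow (pchar_natX k pchar_p)).

Lemma frobenius_pow3 x : sigma (sigma (sigma x)) = x.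
Proof.
rewrite /= /frobenius_pow -!exprM -[RHS]expf_card cardF.
by rewrite !expnS expn0 muln1 mulnA.
Qed.

Lemma natf3_eq0 : (3%:R == 0 :> F) = (3 %| q)%N.
Proof.
have p_prime := pcharf_prime pchar_p.
rewrite -(dvdn_pcharf pchar_p) Euclid_dvdX // k_gt0 andbT.
by rewrite !dvdn_prime2 // eq_sym.
Qed.

Lemma cubic_trace_map_not_inj_mod3_1 c tau :
  (q %% 3 = 1)%N -> ~ injective (cubic_trace_map sigma c tau).
Proof.
move=> q_mod3.
have q_gt1 : (1 < q)%N.
  by rewrite -(expn0 p) ltn_exp2l ?prime_gt1 ?(pcharf_prime pchar_p).
have [x x_nonfixed] : exists x : F, x ^+ q != x.
  by apply: exists_expr_neq; rewrite q_gt1 cardF -{1}(expn1 q) ltn_exp2l.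
have [w w3 w_neq1] : exists2 w : F, w ^+ 3 = 1 & w != 1.
  apply: exists_cube_unity_root; rewrite cardF.
  have := divn_eq (q ^ 3) 3; rewrite -modnXm q_mod3 => ->.
  by rewrite addn1 dvdn_mull.
apply: (cubic_trace_map_unity_root_not_inj (z := sigma x - x) w3 w_neq1).
- by rewrite /= /frobenius_pow -(expr_mod _ w3) q_mod3.
- exact/trace3_sub_sigma/frobenius_pow3.
- by rewrite subr_eq0.
Qed.

Lemma cubic_trace_map_inj_mod3_2 c Q (pchar_Q : [pchar F].-nat Q) :
  (q %% 3 = 2)%N -> c != 0 -> c ^+ q = c ->
  injective (cubic_trace_map sigma c (frobenius_pow pchar_Q)).
Proof.
move=> q_mod3 c_neq0 c_fixed; apply: cubic_trace_map_inj => //.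
- exact: frobenius_pow3.
- by rewrite natf3_eq0 /dvdn q_mod3.
- by apply: expr3_inj_card_mod3; rewrite cardF -modnXm q_mod3.
- by move=> x; rewrite /= /frobenius_pow -!exprM mulnC.
Qed.

End CubicExtension.

Theorem corollary1p9 (p k l : nat) (F : finFieldType) (c : F) :
  prime p -> (0 < k)%N -> #|F| = ((p ^ k) ^ 3)%N ->
  c != 0 -> c ^+ (p ^ k) = c ->
  permutes_field (f6 (p ^ k) (p ^ l) c) <-> (p ^ k %% 3 = 2)%N.
Proof.
move=> p_prime k_gt0 cardF c_neq0 c_fixed.
have pchar_p : p \in [pchar F].
  by apply: (card_finPcharP (n := (k * 3)%N)); rewrite // cardF expnM.
have f6E := horner_f6 (pchar_natX k pchar_p) (pchar_natX l pchar_p) c.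
rewrite (permutes_field_inj f6E).
have [q_mod3|q_mod3|q_mod3] :
    [\/ p ^ k %% 3 = 0, p ^ k %% 3 = 1 | p ^ k %% 3 = 2]%N.
  case: (p ^ k %% 3)%N (ltn_pmod (p ^ k) (isT : (0 < 3)%N)) => [|[|[|]]] // _.
  - exact: Or31.
  - exact: Or32.
  - exact: Or33.
- rewrite q_mod3; split=> // /cubic_trace_map_char3_not_inj[].
  by apply/eqP; rewrite (natf3_eq0 pchar_p k_gt0) /dvdn q_mod3.
- rewrite q_mod3; split=> // f6_inj.
  by case: (cubic_trace_map_not_inj_mod3_1 k_gt0 cardF q_mod3 f6_inj).
- by rewrite q_mod3; split=> // _; apply: cubic_trace_map_inj_mod3_2.
Qed.
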